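(* Let $n\geq1$, $1\leq k\leq n$, and let $\eta_k=(z_k,d_{k,0},\ldots,d_{k,r})$ be as constructed below; write $v_i=v_{i,\eta_k}$ and $r_i=r_{i,\eta_k}$. Then: (1) $d_{k,l}>0$ for all $l\in\{1,\ldots,r\}$; in particular $\eta_k\in\Omega$. (2) For $i\in\{1,\ldots,n\}$, let $l\in\{1,\ldots,r\}$ be the unique index with $\sum_{j=0}^{l-1}d_{k,j}<i\leq\sum_{j=1}^ld_{k,j}$. Then $f_k(v_i)+r_i\leq f_k\big((\sum_{j\text{ even},j\leq l}d_{k,j}+1)(n,n+1)\big)$ if $z_k=1$, $l$ odd; $f_k(v_i)+r_i\leq f_k\big((\sum_{j\text{ odd},j\leq l}d_{k,j}+1)(1,0)\big)$ if $z_k=1$, $l$ even; $f_k(v_i)+r_i\leq f_k\big((\sum_{j\text{ even},j\leq l}d_{k,j}+1)(1,0)\big)$ if $z_k=0$, $l$ odd; $f_k(v_i)+r_i\leq f_k\big((\sum_{j\text{ odd},j\leq l}d_{k,j}+1)(n,n+1)\big)$ if $z_k=0$, $l$ even. (3) If $i,i'$ are positive integers with $\sum_{j=0}^{l-1}d_{k,j}<i<i'\leq\sum_{j=0}^ld_{k,j}$ for some $l\in\{1,\ldots,r\}$, then $f_k(v_i)+r_i\leq f_k(v_{i'})+r_{i'}$. (4) For all $1\leq i<i'\leq n$, $f_k(v_i+r_i(1,1))\leq f_k(v_{i'}+r_{i'}(1,1))$. (5) If $l>2$ and $f_k(v_l+r_l(1,1))=f_k(v_{l-1}+r_{l-1}(1,1))$,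 then $f_k(v_l+r_l(1,1))\geq f_k(v_{l-2}+r_{l-2}(1,1))+2$.
   Context: $f_k(v)=kv_1+(1-k)v_2$ for $v\in\mathbb N^2$ (so $f_k((1,0))=k$, $f_k((n,n+1))=n+1-k$). $\Omega$ is the set of $\eta=(z,d_0,\ldots,d_r)$ with $z\in\{0,1\}$, $d_0=0$, $d_i\geq1$ ($1\leq i\leq r$), $\sum d_i=n$. For $j\in\{1,\ldots,n\}$, $t$ is unique with $\sum_{i<t}d_i<j\leq\sum_{i\leq t}d_i$, $c=j-\sum_{i<t}d_i$; $v_{j,\eta}=(\sum_{i\text{ odd},i<t}d_i+c,0)$ if $z=1,t$ odd; $(0,\sum_{i\text{ even},i<t}d_i+c)$ if $z=1,t$ even; $(0,\sum_{i\text{ odd},i<t}d_i+c)$ if $z=0,t$ odd; $(\sum_{i\text{ even},i<t}d_i+c,0)$ if $z=0,t$ even; $r_{j,\eta}=n\cdot\pi_2(v_{j,\eta})$. Construction of $\eta_k$: $z_k=1$ if $k\leq n+1-k$, else $z_k=0$; $d_{k,0}=0$; for $l\geq1$ with $O_l=\sum_{j\text{ odd},j\leq l-1}d_{k,j}$, $E_l=\sum_{j\text{ even},j\leq l-1}d_{k,j}$: $t_l=\max\{m\in\mathbb N:mk\leq(E_l+1)(n+1-k)\}$ ($z_k=1$, $l$ odd), $\max\{m:m(n+1-k)\leq(O_l+1)k\}$ ($z_k=1$, $l$ even), $\max\{m:m(n+1-k)\leq(E_l+1)k\}$ ($z_k=0$, $l$ odd), $\max\{m:mk\leq(O_l+1)(n+1-k)\}$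 ($z_k=0$, $l$ even); $s_1=0$, $s_l=O_l$ for odd $l>1$, $s_l=E_l$ for even $l$; $d_{k,l}=\min\{n-\sum_{j=0}^{l-1}d_{k,j},t_l-s_l\}$; the process stops at the first $r$ with $\sum_{j=1}^rd_{k,j}=n$. *)

From mathcomp Require Import all_boot all_order all_algebra.
Set Implicit Arguments. Unset Strict Implicit. Unset Printing Implicit Defensive.
Import Order.TTheory GRing.Theory Num.Theory.

Definition fk (k : nat) (v : nat * nat) : int :=
  (k%:Z * v.1%:Z + (1 - k%:Z) * v.2%:Z)%R.

(* eta = (z, d_0, ..., d_r) is represented by z : bool (true = 1) and the
   sequence ds = [:: d_0; ...; d_r]. *)

Definition psumlt (ds : seq nat) (t : nat) : nat := \sum_(i < t) nth 0 ds i.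
Definition oddsum (ds : seq nat) (t : nat) : nat :=
  \sum_(i < t | odd i) nth 0 ds i.
Definition evensum (ds : seq nat) (t : nat) : nat :=
  \sum_(i < t | ~~ odd i) nth 0 ds i.

Definition Omega (n : nat) (z : bool) (ds : seq nat) : Prop :=
  [/\ 0 < size ds, nth 0 ds 0 = 0,
      (forall i, 0 < i < size ds -> 1 <= nth 0 ds i)
    & \sum_(i <- ds) i = n].

(* the index t with sum_{i<t} d_i < j <= sum_{i<=t} d_i (the first t with
   j <= sum_{i <= t} d_i) *)
Definition tidx (ds : seq nat) (j : nat) : nat :=
  find (fun t => j <= psumlt ds t.+1) (iota 0 (size ds)).

Definition vvec (z : bool) (ds : seq nat) (j : nat) : nat * nat :=
  let t := tidx ds j in
  let c := j - psumlt ds t in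
  if z then
    (if odd t then (oddsum ds t + c, 0) else (0, evensum ds t + c))
  else
    (if odd t then (0, oddsum ds t + c) else (evensum ds t + c, 0)).

Definition rr (n : nat) (z : bool) (ds : seq nat) (j : nat) : nat :=
  n * (vvec z ds j).2.

(* max { m in N : m * a <= b }  (for a >= 1 such m satisfy m <= b) *)
Definition tmax (a b : nat) : nat := \max_(m < b.+1 | m * a <= b) m.

Definition zk (n k : nat) : bool := k <= n.+1 - k.

(* given s = [:: d_0; ...; d_{l-1}], compute d_l (l = size s >= 1) *)
Definition dnext (n k : nat) (s : seq nat) : nat :=
  let l := size s in
  let O := \sum_(j < l | odd j) nth 0 s j in
  let E := \sum_(j < l | ~~ odd j) nth 0 s j in
  let t := if zk n k then
             (if odd l then tmax k ((E + 1) * (n.+1 - k))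
              else tmax (n.+1 - k) ((O + 1) * k))
           else
             (if odd l then tmax (n.+1 - k) ((E + 1) * k)
              else tmax k ((O + 1) * (n.+1 - k))) in
  let sl := if l == 1 then 0 else if odd l then O else E in
  minn (n - \sum_(j < l) nth 0 s j) (t - sl).

Fixpoint dlist (n k l : nat) : seq nat :=
  match l with
  | 0 => [:: 0]
  | l'.+1 => let s := dlist n k l' in rcons s (dnext n k s)
  end.

Definition dk (n k l : nat) : nat := nth 0 (dlist n k l) l.

Definition etad (n k r : nat) : seq nat := [seq dk n k j | j <- iota 0 r.+1].

From mathcomp Require Import all_boot all_order all_algebra zify ring.
Import Order.TTheory GRing.Theory Num.Theory.

Set Implicit Arguments.
Unset Strict Implicit.
Unset Printing Implicit Defensive.

(* Let w_l be the weight of block l of eta_k: k if block l moves along (1,0),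
   n+1-k if it moves along (0,1), where r_i adds n to f_k(v_i).  On block l,
   f_k(v_i) + r_i equals w_l (S_l + c), with S_l the total length of the
   earlier blocks of the same parity and c the position of i in the block, so
   it grows by w_l along the block.  The greedy choice of d_l stops block l at
   the last value not exceeding (S'_l + 1) w_(l+1), the value at the start of
   block l+1 (S'_l being the length of the earlier blocks of the other parity);
   an induction shows that the start of block l stays below this bound, which
   gives d_l > 0 and monotonicity across block boundaries.  A tie between
   consecutive values can only happen at a block boundary, where both weights
   are at least 2 and the value two steps back is smaller by a full weight. *)

Definition psum (d : nat -> nat) (t : nat) : nat := \sum_(j < t) d j.
(* For odd l, same_sum d l and other_sum d l are the paper's O_l and E_l;
   for even l they are E_l and O_l. *)
Definition same_sum (d : nat -> nat) (l : nat) : nat :=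
  \sum_(j < l | odd j == odd l) d j.
Definition other_sum (d : nat -> nat) (l : nat) : nat :=
  \sum_(j < l | odd j != odd l) d j.

Lemma psumS d t : psum d t.+1 = psum d t + d t.
Proof. by rewrite /psum big_ord_recr. Qed.

Lemma psum_monotone d : {homo psum d : s t / s <= t}.
Proof.
by apply: homo_leq => [//|s t u|t]; [exact: leq_trans | rewrite psumS leq_addr].
Qed.

Lemma same_sumS d l : same_sum d l.+1 = other_sum d l.
Proof.
rewrite /same_sum /other_sum big_mkcond big_ord_recr /= -big_mkcond /=.
by case: (odd l); rewrite addn0; apply: eq_bigl => j; case: (odd j).
Qed.

Lemma other_sumS d l : other_sum d l.+1 = same_sum d l + d l.
Proof.
rewrite /same_sum /other_sum big_mkcond big_ord_recr /= -big_mkcond /=.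
by case: (odd l) => /=; congr (_ + _); apply: eq_bigl => j; case: (odd j).
Qed.

Lemma same_sum_nth ds t :
  (if odd t then oddsum ds t else evensum ds t) = same_sum (nth 0 ds) t.
Proof. by rewrite /same_sum; case: (odd t); apply: eq_bigl => j; case: (odd j). Qed.

Lemma other_sum_nth ds t :
  (if odd t then evensum ds t else oddsum ds t) = other_sum (nth 0 ds) t.
Proof. by rewrite /other_sum; case: (odd t); apply: eq_bigl => j; case: (odd j). Qed.

Lemma tmaxE a b : 0 < a -> tmax a b = b %/ a.
Proof.
move=> a_gt0; apply/eqP; rewrite eqn_leq; apply/andP; split.
  by apply/bigmax_leqP => i /=; rewrite leq_divRL.
have lt_div : b %/ a < b.+1 by rewrite ltnS leq_div.
by apply: (@leq_bigmax_cond _ _ _ (Ordinal lt_div)); rewrite /= leq_divM.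
Qed.

Lemma tidx_block ds l i : l < size ds ->
  psumlt ds l < i <= psumlt ds l.+1 -> tidx ds i = l.
Proof.
move=> l_lt /andP[lo hi]; rewrite /tidx.
case: findP => [/hasPn/(_ l)|j j_lt found before].
  by rewrite mem_iota add0n l_lt hi => /(_ isT).
rewrite size_iota in j_lt.
have [j_lt_l|l_lt_j|//] := ltngtP j l.
  have := found 0; rewrite nth_iota //= add0n => j_hi.
  have := psum_monotone (nth 0 ds) j_lt_l.
  rewrite /psumlt /psum in lo j_hi *; lia.
by have := before 0 l l_lt_j; rewrite nth_iota //= add0n hi.
Qed.

(* Block l of (z, ds) moves along (1,0) exactly when z == odd l. *)
Definition weight (n k : nat) (z : bool) (l : nat) : nat :=
  if z == odd l then k else n.+1 - k.

Lemma fk_shift k a b c : fk k (a + c, b + c) = (fk k (a, b) + c%:Z)%R.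
Proof. by rewrite /fk /= !PoszD; ring. Qed.

Lemma fk_horizontal k a : fk k (a, 0) = ((a * k)%:Z)%R.
Proof. by rewrite /fk /=; lia. Qed.

Lemma fk_vertical_rr n k a : k <= n.+1 ->
  (fk k (0, a) + (n * a)%:Z)%R = ((a * (n.+1 - k))%:Z)%R.
Proof. by rewrite /fk /=; nia. Qed.

Lemma fk_diagonal n k a : k <= n.+1 ->
  fk k (a * n, a * n.+1) = ((a * (n.+1 - k))%:Z)%R.
Proof. by rewrite /fk /=; nia. Qed.

Section Evaluation.
Variables (n k : nat) (z : bool) (ds : seq nat).
Hypothesis k_le : k <= n.+1.

Lemma fk_vvec_rr j (t := tidx ds j) :
  (fk k (vvec z ds j) + (rr n z ds j)%:Z)%R =
  (((same_sum (nth 0 ds) t + (j - psumlt ds t)) * weight n k z t)%:Z)%R.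
Proof.
rewrite /rr /vvec -/t -same_sum_nth /weight.
by case: z; case: (odd t); rewrite /= ?fk_horizontal ?fk_vertical_rr // muln0 addr0.
Qed.

Lemma fk_next_block_start l :
  (if z then
     (if odd l then fk k ((evensum ds l.+1 + 1) * n, (evensum ds l.+1 + 1) * n.+1)
      else fk k (oddsum ds l.+1 + 1, 0))
   else
     (if odd l then fk k (evensum ds l.+1 + 1, 0)
      else fk k ((oddsum ds l.+1 + 1) * n, (oddsum ds l.+1 + 1) * n.+1))) =
  (((same_sum (nth 0 ds) l.+1 + 1) * weight n k z l.+1)%:Z)%R.
Proof.
rewrite -same_sum_nth /weight /=.
by case: z; case: (odd l); rewrite /= ?fk_horizontal ?fk_diagonal.
Qed.

End Evaluation.

Section Construction.
Variables n k : nat.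
Hypothesis k_range : 0 < k <= n.
Local Notation d := (dk n k).
Local Notation w := (weight n k (zk n k)).

Lemma dk0 : d 0 = 0.
Proof. by []. Qed.

Lemma weight_gt0 l : 0 < w l.
Proof. by rewrite /weight; case: ifP; lia. Qed.

Lemma weightSS l : w l.+2 = w l.
Proof. by rewrite /weight /= negbK. Qed.

Lemma weightD l : w l + w l.+1 = n.+1.
Proof. by rewrite /weight /=; case: (odd l); case: (zk n k) => /=; lia. Qed.

(* The paper's special value s_1 = 0 agrees with same_sum, since no odd index
   lies below 1. *)
Lemma dnextE s (l := size s) :
  dnext n k s = minn (n - psumlt s l)
    (tmax (w l) ((other_sum (nth 0 s) l + 1) * w l.+1) - same_sum (nth 0 s) l).
Proof.
rewrite /dnext -/l -same_sum_nth -other_sum_nth /weight /=.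
rewrite -[\sum_(j < l | odd j) _]/(oddsum s l) -[\sum_(j < l | ~~ odd j) _]/(evensum s l).
have [->|_] := eqVneq l 1.
  have -> : oddsum s 1 = 0 by rewrite /oddsum big_mkcond big_ord1.
  by case: (zk n k).
by case: (odd l); case: (zk n k).
Qed.

Lemma nth_etad r j : j <= r -> nth 0 (etad n k r) j = d j.
Proof. by move=> j_le; rewrite (nth_map 0) ?size_iota // nth_iota. Qed.

Lemma size_dlist l : size (dlist n k l) = l.+1.
Proof. by elim: l => //= l IH; rewrite size_rcons IH. Qed.

Lemma nth_dlist l j : j <= l -> nth 0 (dlist n k l) j = d j.
Proof.
move=> j_le; rewrite /dk -(subnK j_le); elim: (l - j) => //= i IH.
by rewrite nth_rcons size_dlist ltnS leq_addl IH.
Qed.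

Lemma dlistE l : dlist n k l = etad n k l.
Proof.
apply: (eq_from_nth (x0 := 0)) => [|j]; first by rewrite size_dlist size_map size_iota.
by rewrite size_dlist ltnS => j_le; rewrite nth_dlist ?nth_etad.
Qed.

Lemma dk_rec l : 0 < l ->
  d l = minn (n - psum d l) ((other_sum d l + 1) * w l.+1 %/ w l - same_sum d l).
Proof.
case: l => [//|l] _.
rewrite {1}/dk /= nth_rcons size_dlist ltnn eqxx dlistE dnextE tmaxE ?weight_gt0 //.
rewrite size_map size_iota /psumlt /psum /other_sum /same_sum.
congr (minn (_ - _) (((_ + 1) * _) %/ _ - _));
  by apply: eq_bigr => j _; rewrite nth_etad // -ltnS.
Qed.

Lemma psum_etad r t : t <= r.+1 -> psumlt (etad n k r) t = psum d t.
Proof.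
by move=> t_le; apply: eq_bigr => j _; rewrite nth_etad // -ltnS (leq_trans (ltn_ord j)).
Qed.

Lemma same_sum_etad r t : t <= r.+1 -> same_sum (nth 0 (etad n k r)) t = same_sum d t.
Proof.
by move=> t_le; apply: eq_bigr => j _; rewrite nth_etad // -ltnS (leq_trans (ltn_ord j)).
Qed.

Lemma psum_le l : psum d l <= n.
Proof.
elim: l => [|l IH]; first by rewrite /psum big_ord0.
rewrite psumS; case: l IH => [|l] IH; first by rewrite addn0.
by rewrite (@dk_rec l.+1) //; lia.
Qed.

(* (same_sum d l + 1) * w l is the value at the start of block l; this
   invariant keeps the greedy lengths d_l positive. *)
Lemma block_start_le l : 0 < l -> psum d l < n ->
  (same_sum d l + 1) * w l <= (other_sum d l + 1) * w l.+1.
Proof.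
elim: l => [//|[_ _ _|l IH _ lt_n]].
  rewrite same_sumS other_sumS /same_sum /other_sum !big_ord0 weightSS /weight /zk /=.
  by rewrite dk0 eqb_id eqbF_neg; case: (boolP (k <= n.+1 - k)) => /=; lia.
have lt_n' : psum d l.+1 < n by move: lt_n; rewrite psumS; lia.
have := IH isT lt_n'; rewrite -leq_divRL ?weight_gt0 // => start_le.
have ceil := ltn_ceil ((other_sum d l.+1 + 1) * w l.+2) (weight_gt0 l.+1).
have d_eq := @dk_rec l.+1 isT; rewrite psumS in lt_n.
set T := _ %/ _ in start_le ceil d_eq.
rewrite same_sumS (other_sumS d l.+1) (weightSS l.+1).
have -> : same_sum d l.+1 + d l.+1 + 1 = T.+1 by lia.
exact: ltnW.
Qed.

Lemma dk_gt0 l : 0 < l -> psum d l < n -> 0 < d l.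
Proof.
move=> l_gt0 lt_n; have := block_start_le l_gt0 lt_n.
rewrite -leq_divRL ?weight_gt0 // (dk_rec l_gt0); lia.
Qed.

Lemma block_end_le l : 0 < l -> psum d l < n ->
  (same_sum d l + d l) * w l <= (other_sum d l + 1) * w l.+1.
Proof.
move=> l_gt0 lt_n; apply: leq_trans (leq_trunc_div _ (w l)).
have := block_start_le l_gt0 lt_n; rewrite -leq_divRL ?weight_gt0 //.
rewrite leq_mul2r (dk_rec l_gt0); lia.
Qed.

Lemma psum_stop : exists2 r, psum d r.+1 = n & psum d r < n.
Proof.
have psum_ge t : minn n t <= psum d t.+1.
  elim: t => [|t IH]; first by rewrite minn0.
  rewrite psumS; have := psum_le t.+1; have := @dk_gt0 t.+1 isT; lia.
have reach : exists t, n <= psum d t.+1 by exists n; rewrite -{1}(minnn n).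
have [r r_reach r_min] := ex_minnP reach.
exists r; first by apply/eqP; rewrite eqn_leq psum_le.
case: r r_reach r_min => [|r] _ r_min; first by rewrite /psum big_ord0; lia.
by rewrite ltnNge; apply/negP => /r_min; rewrite ltnn.
Qed.

(* If k = 1 or k = n, the first block already has length n. *)
Lemma weight_gt1 l : psum d 2 < n -> 1 < w l.
Proof.
have d1 : d 1 = minn n (w 0 %/ w 1).
  rewrite dk_rec // weightSS same_sumS other_sumS /psum /same_sum /other_sum.
  by rewrite !big_ord0 big_ord1 dk0 add0n mul1n !subn0.
have w1_le : w 1 <= w l.
  rewrite /weight /zk /=; case: (odd l); rewrite ?eqb_id ?eqbF_neg;
    by case: (leqP k (n.+1 - k)) => /=; lia.
apply: contraTT; rewrite -leqNgt => wl_le.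
have w1 : w 1 = 1 by have := weight_gt0 1; lia.
have w0 : w 0 = n by have := weightD 0; lia.
by rewrite -leqNgt psumS psumS d1 dk0 w0 w1 divn1 minnn /psum big_ord0.
Qed.

Variable r : nat.
Hypothesis psum_r_eq : psum d r.+1 = n.
Hypothesis psum_r_lt : psum d r < n.
Local Notation ds := (etad n k r).
Local Notation F i := (fk k (vvec (zk n k) ds i) + (rr n (zk n k) ds i)%:Z)%R.

Lemma psum_lt_n l : l <= r -> psum d l < n.
Proof. by move=> l_le; apply: leq_ltn_trans psum_r_lt; apply: psum_monotone. Qed.

Lemma psum_lt_n_le l : psum d l < n -> l <= r.
Proof.
by rewrite ltnNge; apply: contraR; rewrite -ltnNge -{1}psum_r_eq => /psum_monotone.
Qed.

Lemma dk_gt0_upto l : 0 < l <= r -> 0 < d l.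
Proof. by case/andP=> l_gt0 l_le; apply: dk_gt0 l_gt0 (psum_lt_n l_le). Qed.

Lemma etad_Omega : Omega n (zk n k) ds.
Proof.
split; first by rewrite size_map size_iota.
- by [].
- move=> j; rewrite size_map size_iota ltnS => j_in.
  by rewrite nth_etad ?dk_gt0_upto //; case/andP: j_in.
- by rewrite big_map -[RHS]psum_r_eq /psum -(big_mkord xpredT).
Qed.

Lemma F_block l i : 0 < l <= r -> psum d l < i <= psum d l.+1 ->
  F i = (((same_sum d l + (i - psum d l)) * w l)%:Z)%R.
Proof.
move=> /andP[_ l_le] i_in.
have l_lt : l < size ds by rewrite size_map size_iota.
rewrite fk_vvec_rr; last by case/andP: k_range => _ /leqW.
by rewrite (tidx_block l_lt) ?psum_etad ?same_sum_etad // ltnW.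
Qed.

Lemma block_of i : 0 < i <= n ->
  exists2 l, 0 < l <= r & psum d l < i <= psum d l.+1.
Proof.
move=> /andP[i_gt0 i_le].
have reach : exists t, i <= psum d t.+1 by exists r; rewrite psum_r_eq.
have [[|l] i_le_l l_min] := ex_minnP reach.
  by move: i_le_l; rewrite psumS dk0 /psum big_ord0; lia.
exists l.+1; first by rewrite /= l_min // psum_r_eq.
by rewrite i_le_l andbT ltnNge; apply/negP => /l_min; rewrite ltnn.
Qed.

Lemma F_block_succ l i : 0 < l <= r -> psum d l < i < psum d l.+1 ->
  F i.+1 = (F i + (w l)%:Z)%R.
Proof.
move=> l_in /andP[lo hi].
rewrite !(F_block l_in) ?lo ?(ltnW hi) ?(ltn_trans lo) //.
by rewrite -PoszD subSn ?(ltnW lo) // addnS mulSnr.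
Qed.

Lemma F_block_start l : 0 < l <= r ->
  F (psum d l).+1 = (((same_sum d l + 1) * w l)%:Z)%R.
Proof.
move=> /[dup] l_in /andP[l_gt0 l_le].
have d_gt0 := dk_gt0 l_gt0 (psum_lt_n l_le).
by rewrite (F_block l_in) ?subSnn // psumS; lia.
Qed.

Lemma F_block_end l : 0 < l <= r ->
  F (psum d l.+1) = (((same_sum d l + d l) * w l)%:Z)%R.
Proof.
move=> /[dup] l_in /andP[l_gt0 l_le].
have d_gt0 := dk_gt0 l_gt0 (psum_lt_n l_le).
by rewrite (F_block l_in) psumS ?addKn // leqnn andbT -addn1 leq_add2l.
Qed.

Lemma F_le_succ i : 0 < i < n -> (F i <= F i.+1)%R.
Proof.
move=> /andP[i_gt0 i_lt].
have i_in : 0 < i <= n by rewrite i_gt0 ltnW.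
have [l l_in /andP[lo hi]] := block_of i_in.
have [i_end|i_mid] := eqVneq i (psum d l.+1); last first.
  by rewrite (F_block_succ l_in) ?lerDl // lo ltn_neqAle i_mid.
have l_lt : l < r by apply: psum_lt_n_le; rewrite -i_end.
have l1_in : 0 < l.+1 <= r by [].
rewrite i_end (F_block_end l_in) (F_block_start l1_in) same_sumS lez_nat.
case/andP: l_in => l_gt0 _.
by apply: block_end_le; last exact: psum_lt_n (ltnW l_lt).
Qed.

(* Blocks of equal parity move in the same direction, so block l+2 starts
   one step after block l ended. *)
Lemma F_block_start_SS l : 0 < l -> l.+2 <= r ->
  F (psum d l.+2).+1 = (F (psum d l.+1) + (w l)%:Z)%R.
Proof.
move=> l_gt0 l_lt; have l_le : l <= r by rewrite ltnW // ltnW.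
rewrite (@F_block_start l.+2) ?l_lt // (@F_block_end l) ?l_gt0 //.
by rewrite same_sumS other_sumS weightSS -PoszD mulnDl mul1n.
Qed.

Lemma F_flat_succ i : 0 < i -> i.+2 <= n -> F i.+2 = F i.+1 ->
  (F i + 2 <= F i.+2)%R.
Proof.
move=> i_gt0 i_le F_eq.
have i1_in : 0 < i.+1 <= n by exact: ltnW.
have [l l_in /andP[lo hi]] := block_of i1_in; have /andP[l_gt0 _] := l_in.
have i1_end : i.+1 = psum d l.+1.
  apply/eqP; rewrite eqn_leq hi leqNgt; apply/negP => i1_lt.
  by move: F_eq; rewrite (F_block_succ l_in) ?lo //; have := weight_gt0 l; lia.
have l_lt : l < r by apply: psum_lt_n_le; rewrite -i1_end.
have w_gt1 j : 1 < w j by apply/weight_gt1/psum_lt_n; lia.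
have [i_mid|i_start] := ltnP (psum d l) i.
  by rewrite F_eq (F_block_succ l_in) ?i_mid -?i1_end //; have := w_gt1 l; lia.
have i_end : i = psum d l by lia.
have l_gt1 : 1 < l.
  rewrite ltnNge; apply/negP => /(psum_monotone d).
  by rewrite -i_end psumS dk0 /psum big_ord0; lia.
have l'_gt0 : 0 < l.-1 by rewrite -ltnS prednK.
rewrite i1_end i_end -(prednK l_gt0) F_block_start_SS ?prednK //.
by rewrite lerD2l lez_nat.
Qed.

Lemma F_le_next_block_start l i : 0 < l <= r ->
  psumlt ds l < i <= psumlt ds l.+1 ->
  (F i <= (((same_sum (nth 0 ds) l.+1 + 1) * w l.+1)%:Z)%R)%R.
Proof.
move=> /[dup] l_in /andP[l_gt0 l_le].
rewrite !psum_etad ?(leqW l_le) // => i_in.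
rewrite (F_block l_in i_in) same_sum_etad // same_sumS lez_nat.
apply: leq_trans (block_end_le l_gt0 (psum_lt_n l_le)).
by rewrite leq_mul2r leq_add2l -(leq_add2l (psum d l)) -psumS; lia.
Qed.

Lemma F_homo_block l i i' : 0 < l <= r ->
  psumlt ds l < i -> i < i' -> i' <= psumlt ds l.+1 -> (F i <= F i')%R.
Proof.
move=> /[dup] l_in /andP[_ l_le].
rewrite !psum_etad ?(leqW l_le) // => lo lt hi.
have i_in : psum d l < i <= psum d l.+1 by rewrite lo (leq_trans (ltnW lt)).
have i'_in : psum d l < i' <= psum d l.+1 by rewrite hi (ltn_trans lo).
rewrite (F_block l_in i_in) (F_block l_in i'_in) lez_nat.
by rewrite leq_mul2r leq_add2l leq_sub2r ?orbT // ltnW.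
Qed.

Lemma F_homo i i' : 0 < i -> i < i' -> i' <= n -> (F i <= F i')%R.
Proof.
move=> i_gt0 lt i'_le.
apply: (homo_ltn_in (D := [pred j | 0 < j <= n]) (f := fun j => F j) (r := <=%R)).
all: rewrite ?inE ?i_gt0 ?i'_le ?(ltn_trans i_gt0 lt) //=.
- exact: le_trans.
- by move=> a b; rewrite !inE => a_in b_in c c_in; rewrite inE; lia.
- move=> j; rewrite !inE => /andP[j_gt0 _] /andP[_ j1_le].
  by apply: F_le_succ; rewrite j_gt0.
- exact: leq_trans (ltnW lt) i'_le.
Qed.

End Construction.

Lemma sum_dk_from1 n k t : \sum_(1 <= j < t) dk n k j = psum (dk n k) t.
Proof.
rewrite /psum -(big_mkord xpredT); case: t => [|t]; first by rewrite !big_geq.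
by rewrite [RHS]big_ltn // dk0.
Qed.

Theorem lemma3p7 (n k : nat) (hn : 1 <= n) (hk : 1 <= k <= n) :
  exists r : nat,
    (* r is the first index at which the process stops *)
    (\sum_(1 <= j < r.+1) dk n k j = n /\
     (forall r', r' < r -> \sum_(1 <= j < r'.+1) dk n k j <> n)) /\
    let z := zk n k in
    let ds := etad n k r in
    let F := fun i => (fk k (vvec z ds i) + (rr n z ds i)%:Z)%R in
    let G := fun i => fk k ((vvec z ds i).1 + rr n z ds i,
                            (vvec z ds i).2 + rr n z ds i) in
    (* (1) *)
    ((forall l, 1 <= l <= r -> 0 < dk n k l) /\ Omega n z ds) /\
    (* (2) *)
    (forall i l, 1 <= i <= n -> 1 <= l <= r ->
       psumlt ds l < i <= psumlt ds l.+1 ->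
       (F i <= (if z then
                  (if odd l then
                     fk k ((evensum ds l.+1 + 1) * n,
                           (evensum ds l.+1 + 1) * n.+1)
                   else fk k (oddsum ds l.+1 + 1, 0))
                else
                  (if odd l then fk k (evensum ds l.+1 + 1, 0)
                   else fk k ((oddsum ds l.+1 + 1) * n,
                              (oddsum ds l.+1 + 1) * n.+1))))%R) /\
    (* (3) *)
    (forall i i' l, 0 < i -> 0 < i' -> 1 <= l <= r ->
       psumlt ds l < i -> i < i' -> i' <= psumlt ds l.+1 ->
       (F i <= F i')%R) /\
    (* (4) *)
    (forall i i', 1 <= i -> i < i' -> i' <= n -> (G i <= G i')%R) /\
    (* (5) *)
    (forall l, 2 < l -> l <= n -> G l = G l.-1 ->
       (G l.-2 + 2 <= G l)%R).
Proof.
have [r r_eq r_lt] := psum_stop hk.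
exists r; split.
  rewrite !sum_dk_from1; split=> // r' r'_lt; rewrite sum_dk_from1.
  by apply/eqP; rewrite neq_ltn (leq_ltn_trans (psum_monotone _ r'_lt)).
move=> z ds F G.
have G_F i : G i = F i by rewrite /G fk_shift.
have k_le : k <= n.+1 by case/andP: hk => _ /leqW.
split; [split|split; [|split; [|split]]].
- by move=> l; apply: dk_gt0_upto.
- exact: etad_Omega.
- move=> i l _ l_in i_in; rewrite fk_next_block_start //.
  exact: F_le_next_block_start.
- by move=> i i' l _ _; apply: F_homo_block.
- by move=> i i' i_gt0 lt i'_le; rewrite !G_F; apply: (F_homo hk r_eq r_lt).
- case=> [|[|[|i]]] // _ i_le; rewrite !G_F /F /=.
  exact: (F_flat_succ hk r_eq r_lt).
Qed.
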